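(* Let $n\geq 1$. The monoid $M_n$ is left-cancellative and admits conditional right-lcms: any two elements of $M_n$ that admit a common right-multiple admit a right-lcm.
   Context: $M_n$ denotes the monoid with generators $\rho_1,\dots,\rho_n$ and relations $\rho_1\rho_n\rho_i=\rho_{i+1}\rho_n$ for $1\leq i\leq n-1$. $c$ is a right-multiple of $a$ if $c=ab$ for some $b$. A right-lcm of $a,b$ is a common right-multiple of $a$ and $b$ that left-divides every common right-multiple of $a$ and $b$. *)

From mathcomp Require Import all_boot.
Set Implicit Arguments. Unset Strict Implicit. Unset Printing Implicit Defensive.

(* Elements are represented by words (seq nat) whose letters lie in {1..n};
   the letter k stands for rho_k. *)

Definition word_ok (n : nat) (w : seq nat) : bool := all (fun x => 0 < x <= n) w.

Inductive Mn_eq (n : nat) : seq nat -> seq nat -> Prop :=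
| Mn_rel : forall (u v : seq nat) (i : nat), 1 <= i <= n.-1 ->
    Mn_eq n (u ++ [:: 1; n; i] ++ v) (u ++ [:: i.+1; n] ++ v)
| Mn_refl : forall w, Mn_eq n w w
| Mn_sym : forall w1 w2, Mn_eq n w1 w2 -> Mn_eq n w2 w1
| Mn_trans : forall w1 w2 w3, Mn_eq n w1 w2 -> Mn_eq n w2 w3 -> Mn_eq n w1 w3.

Definition right_multiple (n : nat) (c a : seq nat) : Prop :=
  exists b, word_ok n b /\ Mn_eq n c (a ++ b).

Definition is_right_lcm (n : nat) (a b m : seq nat) : Prop :=
  [/\ word_ok n m, right_multiple n m a, right_multiple n m b &
      forall c, word_ok n c -> right_multiple n c a -> right_multiple n c b ->
        right_multiple n c m].

Definition left_cancellative (n : nat) : Prop :=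
  forall a b c, word_ok n a -> word_ok n b -> word_ok n c ->
    Mn_eq n (a ++ b) (a ++ c) -> Mn_eq n b c.

Definition conditional_right_lcms (n : nat) : Prop :=
  forall a b, word_ok n a -> word_ok n b ->
    (exists c, [/\ word_ok n c, right_multiple n c a & right_multiple n c b]) ->
    exists m, is_right_lcm n a b m.

From mathcomp Require Import all_boot.
From mathcomp Require Import zify.
Set Implicit Arguments. Unset Strict Implicit. Unset Printing Implicit Defensive.

(* Give each letter k the weight max 1 k; the defining
   relation  1 n i = (i+1) n  preserves weight, so weight is an invariant of
   M_n.  Both claims are proved by strong induction on weight.

   Left cancellation reduces to cancelling one letter.  We analyse when two
   words are equal in M_n by looking at their heads: either they have the
   same first letter and equal tails, or both are visibly rho_1 t1, rho_1 t2
   (through a relation applied at the front) with t1 = t2.  This relation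
   [head_equiv] contains equality in M_n, provided the letter n can be
   cancelled on lighter words; hence cancellation follows by induction.

   For right-lcms we first treat two distinct letters s, t (explicit lcms
   rho_1 rho_n rho_(k-1) for {1, k}, and rho_j rho_n p for {j, k} built from
   an lcm rho_(j-1) p of {j-1, k-1}); the general case then follows by
   combining letter lcms with lcms of lighter words, via the lemma
   [lcm_common_prefix] which computes lcms after cancelling a common prefix. *)

Section Mn.
Variable n : nat.

Local Notation "u ≡ v" := (Mn_eq n u v) (at level 70, no associativity).

Lemma equiv_refl w : w ≡ w. Proof. exact: Mn_refl. Qed.
Lemma equiv_sym u v : u ≡ v -> v ≡ u. Proof. exact: Mn_sym. Qed.
Lemma equiv_trans u v w : u ≡ v -> v ≡ w -> u ≡ w. Proof. exact: Mn_trans. Qed.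
Hint Resolve equiv_refl : core.

Lemma equiv_cat u v a b : a ≡ b -> u ++ a ++ v ≡ u ++ b ++ v.
Proof.
elim=> {a b} [u0 v0 i Hi|w|w1 w2 _ IH|w1 w2 w3 _ IH1 _ IH2].
- by have := @Mn_rel n (u ++ u0) (v0 ++ v) i Hi; rewrite !catA.
- exact: equiv_refl.
- exact: equiv_sym.
- exact: equiv_trans IH1 IH2.
Qed.

Lemma equiv_catl u a b : a ≡ b -> u ++ a ≡ u ++ b.
Proof. by move=> H; have := equiv_cat u [::] H; rewrite !cats0. Qed.

Lemma equiv_catr v a b : a ≡ b -> a ++ v ≡ b ++ v.
Proof. by move=> H; have := equiv_cat [::] v H. Qed.

Lemma equiv_cons s a b : a ≡ b -> s :: a ≡ s :: b.
Proof. exact: (equiv_catl [:: s]). Qed.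

Lemma relation_k k p : 2 <= k <= n -> [:: 1, n, k.-1 & p] ≡ [:: k, n & p].
Proof.
move=> Hk; have Hi : 1 <= k.-1 <= n.-1 by lia.
by have := @Mn_rel n [::] p k.-1 Hi; rewrite /= (ltn_predK (m := 1)) //; lia.
Qed.

Definition weight (w : seq nat) : nat := sumn (map (maxn 1) w).

Lemma weight_cat a b : weight (a ++ b) = weight a + weight b.
Proof. by rewrite /weight map_cat sumn_cat. Qed.

Lemma weight_cons s a : weight (s :: a) = maxn 1 s + weight a.
Proof. by []. Qed.

Lemma equiv_weight a b : a ≡ b -> weight a = weight b.
Proof.
elim=> {a b} [u v i Hi|w|w1 w2 _ IH|w1 w2 w3 _ IH1 _ IH2] //.
- rewrite !weight_cat /weight /=; lia.
- by rewrite IH1.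
Qed.

Lemma equiv_word_ok a b : a ≡ b -> word_ok n a = word_ok n b.
Proof.
elim=> {a b} [u v i Hi|w|w1 w2 _ IH|w1 w2 w3 _ IH1 _ IH2] //.
- rewrite /word_ok !all_cat.
  have -> : all (fun x => 0 < x <= n) [:: 1; n; i] by rewrite /=; lia.
  by have -> : all (fun x => 0 < x <= n) [:: i.+1; n] by rewrite /=; lia.
- by rewrite IH1.
Qed.

(* [rho1_factor w t]: w visibly equals rho_1 t, either because w starts with
   the letter 1, or because w = rho_s rho_n y = rho_1 rho_n rho_(s-1) y. *)
Definition rho1_factor (w t : seq nat) : Prop :=
  if w is s :: a then (s = 1 /\ t = a) \/
     (exists y, 2 <= s <= n /\ a ≡ n :: y /\ t = [:: n, s.-1 & y])
  else False.

Definition head_equiv (w1 w2 : seq nat) : Prop :=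
  (head 0 w1 = head 0 w2 /\ behead w1 ≡ behead w2) \/
  (exists t1 t2, [/\ rho1_factor w1 t1, rho1_factor w2 t2 & t1 ≡ t2]).

Definition cancel_n_below (W : nat) : Prop :=
  forall v y, weight (n :: v) < W -> n :: v ≡ n :: y -> v ≡ y.

Lemma rho1_factor_uniq W w t t' : cancel_n_below W -> weight w = W ->
  rho1_factor w t -> rho1_factor w t' -> t ≡ t'.
Proof.
move=> cancel_n; case: w => [|s a] //= Hw.
case=> [[Hs ->]|[y [Hs [Ha ->]]]]; case=> [[Hs' ->]|[y' [Hs' [Ha' ->]]]] //;
  try lia.
apply/equiv_cons/equiv_cons/cancel_n; last exact: equiv_trans (equiv_sym Ha) Ha'.
by rewrite -(equiv_weight Ha) -Hw weight_cons; lia.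
Qed.

Lemma rho1_factor_transfer w1 w2 t : head 0 w1 = head 0 w2 ->
  behead w1 ≡ behead w2 -> rho1_factor w2 t ->
  exists2 t', rho1_factor w1 t' & t' ≡ t.
Proof.
case: w2 => [|s a] //=; case: w1 => [|s' b] /= hh Hb.
- by rewrite -hh; case=> [[? _]|[y [Hs _]]]; lia.
- subst s'; case=> [[-> ->]|[y [Hs [Ha ->]]]]; first by exists b; first left.
  exists [:: n, s.-1 & y] => //; right; exists y; split => //; split => //.
  exact: equiv_trans Hb Ha.
Qed.

Lemma head_equiv_sym w1 w2 : head_equiv w1 w2 -> head_equiv w2 w1.
Proof.
case=> [[h e]|[t1 [t2 [o1 o2 e]]]]; first by left; split; last exact: equiv_sym.
by right; exists t2, t1; split => //; apply: equiv_sym.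
Qed.

Lemma head_equiv_trans W w1 w2 w3 : cancel_n_below W -> weight w2 = W ->
  head_equiv w1 w2 -> head_equiv w2 w3 -> head_equiv w1 w3.
Proof.
move=> cancel_n Hw.
case=> [[h12 e12]|[t1 [t2 [o1 o2 e12]]]];
case=> [[h23 e23]|[t2' [t3 [o2' o3 e23]]]].
- by left; split; [rewrite h12|apply: equiv_trans e12 e23].
- have [t' o1' e'] := rho1_factor_transfer h12 e12 o2'.
  by right; exists t', t3; split => //; apply: equiv_trans e' e23.
- have [t' o3' e'] := rho1_factor_transfer (esym h23) (equiv_sym e23) o2.
  by right; exists t1, t'; split => //; apply: equiv_trans e12 (equiv_sym e').
- have e2 := rho1_factor_uniq cancel_n Hw o2 o2'.
  right; exists t1, t3; split => //.
  exact: equiv_trans e12 (equiv_trans e2 e23).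
Qed.

Lemma equiv_head_equiv_below W w1 w2 : cancel_n_below W ->
  w1 ≡ w2 -> weight w1 = W -> head_equiv w1 w2.
Proof.
move=> cancel_n.
elim=> {w1 w2} [u v i Hi|w|w1 w2 H12 IH|w1 w2 w3 H12 IH1 H23 IH2] Hw.
- case: u Hw => [|x u] Hw /=; last by left; split => //; apply: Mn_rel.
  right; exists [:: n, i & v], [:: n, i & v]; split => //; first by left.
  by right; exists v; split; [lia|split].
- by left.
- by apply/head_equiv_sym/IH; rewrite (equiv_weight H12).
- apply: (head_equiv_trans cancel_n _ (IH1 Hw) (IH2 _));
    by rewrite -(equiv_weight H12).
Qed.

(* Cancellation of one letter, by strong induction on weight: in the rho_1
   case of [head_equiv] one cancels n and then s-1 on lighter words. *)
Lemma cancel_letter s a b : s :: a ≡ s :: b -> a ≡ b.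
Proof.
move: {2}(weight (s :: a)) (erefl (weight (s :: a))) => W.
elim/ltn_ind: W s a b => W IH s a b Hw He.
have cancel_n : cancel_n_below W.
  by move=> v y Hv; apply: (IH _ Hv n v y erefl).
case: (equiv_head_equiv_below cancel_n He Hw) => [[_ //]|[t1 [t2 [o1 o2 e]]]].
move: o1 o2 e => /= [[Hs ->]|[y1 [Hs [Ha ->]]]] [[Hs' ->]|[y2 [Hs' [Hb ->]]]] //
  e; try lia.
have Hwt : weight (s :: a) = maxn 1 s + maxn 1 n + weight y1.
  by rewrite weight_cons (equiv_weight Ha) weight_cons addnA.
have e1 : s.-1 :: y1 ≡ s.-1 :: y2.
  by apply: (IH _ _ n _ _ erefl e); rewrite -Hw Hwt !weight_cons; lia.
have e2 : y1 ≡ y2.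
  by apply: (IH _ _ s.-1 _ _ erefl e1); rewrite -Hw Hwt weight_cons; lia.
exact: equiv_trans Ha (equiv_trans (equiv_cons n e2) (equiv_sym Hb)).
Qed.

Lemma cancel_prefix u a b : u ++ a ≡ u ++ b -> a ≡ b.
Proof. by elim: u => //= x u IH /cancel_letter; apply: IH. Qed.

Lemma equiv_distinct_heads s t x y : s != t -> s :: x ≡ t :: y ->
  exists t1 t2, [/\ rho1_factor (s :: x) t1, rho1_factor (t :: y) t2 & t1 ≡ t2].
Proof.
move=> neq H; have cancel_n : cancel_n_below (weight (s :: x)).
  by move=> v w _; apply: cancel_letter.
case: (equiv_head_equiv_below cancel_n H erefl) => [[/= hst _]|//].
by rewrite hst eqxx in neq.
Qed.

Lemma equiv_1_k k x y : 2 <= k <= n -> 1 :: x ≡ k :: y ->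
  exists2 y', y ≡ n :: y' & x ≡ [:: n, k.-1 & y'].
Proof.
move=> Hk H; have neq : 1 != k by apply/eqP; lia.
have [t1 [t2 [o1 o2 e]]] := equiv_distinct_heads neq H.
move: o1 o2 e => /= [[_ ->]|[y1 [Hs _]]]; last by lia.
by case=> [[hk _]|[y' [_ [Hy ->]]]] e; [lia|exists y'].
Qed.

Lemma equiv_j_k j k x y : 2 <= j <= n -> 2 <= k <= n -> j != k ->
  j :: x ≡ k :: y ->
  exists x' y', [/\ x ≡ n :: x', y ≡ n :: y' & j.-1 :: x' ≡ k.-1 :: y'].
Proof.
move=> Hj Hk neq H; have [t1 [t2 [o1 o2 e]]] := equiv_distinct_heads neq H.
move: o1 o2 e => /= [[hj _]|[x' [_ [Hx ->]]]]; first by lia.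
case=> [[hk _]|[y' [_ [Hy ->]]]] e; first by lia.
by exists x', y'; split => //; apply: cancel_letter e.
Qed.

Definition ldvd (a c : seq nat) : Prop := exists b, c ≡ a ++ b.

Definition is_lcm (a b m : seq nat) : Prop :=
  [/\ ldvd a m, ldvd b m & forall e, ldvd a e -> ldvd b e -> ldvd m e].

Lemma ldvd_refl a : ldvd a a. Proof. by exists [::]; rewrite cats0. Qed.

Lemma ldvd_nil c : ldvd [::] c. Proof. by exists c. Qed.

Lemma ldvd_head s a : ldvd [:: s] (s :: a). Proof. by exists a. Qed.

Lemma ldvd_trans a b c : ldvd a b -> ldvd b c -> ldvd a c.
Proof.
move=> [x Hb] [y Hc]; exists (x ++ y); rewrite catA.
exact: equiv_trans Hc (equiv_catr y Hb).
Qed.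

Lemma ldvd_equivl a a' c : a ≡ a' -> ldvd a c -> ldvd a' c.
Proof. by move=> H [x Hx]; exists x; apply: equiv_trans Hx (equiv_catr x H). Qed.

Lemma is_lcm_sym a b m : is_lcm a b m -> is_lcm b a m.
Proof. by case=> h1 h2 h3; split => // e H1 H2; apply: h3. Qed.

Lemma is_lcm_equivl a a' b m : a ≡ a' -> is_lcm a b m -> is_lcm a' b m.
Proof.
move=> H [h1 h2 h3]; split => //; first exact: ldvd_equivl H h1.
by move=> e H1 H2; apply: h3 => //; apply: ldvd_equivl (equiv_sym H) H1.
Qed.

(* Left multiplication preserves lcms; this uses left cancellation. *)
Lemma is_lcm_prefix u a b m : is_lcm a b m -> is_lcm (u ++ a) (u ++ b) (u ++ m).
Proof.
case=> [[x Hx] [y Hy] h3]; split; [exists x|exists y|];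
  try by rewrite -catA; apply: equiv_catl.
move=> e [x' Hx'] [y' Hy'].
have Hxy : a ++ x' ≡ b ++ y'.
  by apply: (@cancel_prefix u); rewrite !catA; apply: equiv_trans (equiv_sym Hx') Hy'.
have [z Hz] := h3 (a ++ x') (ex_intro _ x' (equiv_refl _)) (ex_intro _ y' Hxy).
exists z; rewrite -catA; rewrite -catA in Hx'.
exact: equiv_trans Hx' (equiv_catl u Hz).
Qed.

Lemma is_lcm_through a b m0 la lb m :
  (forall e, ldvd a e -> ldvd b e -> ldvd m0 e) ->
  is_lcm m0 a la -> is_lcm m0 b lb -> is_lcm la lb m -> is_lcm a b m.
Proof.
move=> H [_ a1 a3] [_ b1 b3] [l1 l2 l3]; split.
- exact: ldvd_trans a1 l1.
- exact: ldvd_trans b1 l2.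
- by move=> e Ha Hb; have Hm := H e Ha Hb; apply: l3; [apply: a3|apply: b3].
Qed.

Definition lcms_below (W : nat) : Prop :=
  forall a b c, weight c < W -> ldvd a c -> ldvd b c -> exists m, is_lcm a b m.

(* After cancelling a common prefix of positive weight, the common multiple
   becomes lighter, so the induction hypothesis provides the lcm. *)
Lemma lcm_common_prefix u a b c : lcms_below (weight c) -> 0 < weight u ->
  ldvd (u ++ a) c -> ldvd (u ++ b) c -> exists m, is_lcm (u ++ a) (u ++ b) m.
Proof.
move=> IH Hu [x Hx] [y Hy].
have Hxy : a ++ x ≡ b ++ y.
  by apply: (@cancel_prefix u); rewrite !catA; apply: equiv_trans (equiv_sym Hx) Hy.
have [|||m Hm] := IH a b (a ++ x); [|by exists x|by exists y|].
- by rewrite (equiv_weight Hx) !weight_cat; lia.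
- by exists (u ++ m); apply: is_lcm_prefix.
Qed.

Lemma lcm_1_k k : 2 <= k <= n -> is_lcm [:: 1] [:: k] [:: 1; n; k.-1].
Proof.
move=> Hk; split; [by exists [:: n; k.-1]|by exists [:: n]; apply: relation_k|].
move=> e [x Hx] [y Hy].
have [y' Hy' Hx'] := equiv_1_k Hk (equiv_trans (equiv_sym Hx) Hy).
by exists y'; apply: equiv_trans Hx (equiv_cons 1 Hx').
Qed.

Lemma lcm_j_k j k r : 2 <= j <= n -> 2 <= k <= n -> j != k ->
  is_lcm [:: j.-1] [:: k.-1] r -> exists m0, is_lcm [:: j] [:: k] m0.
Proof.
move=> Hj Hk neq [[p Hp] [q Hq] Hl]; exists [:: j, n & p]; split.
- by exists [:: n & p].
- exists [:: n & q].
  apply: equiv_trans (equiv_sym (relation_k p Hj)) _.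
  apply: equiv_trans (equiv_cons 1 (equiv_cons n (equiv_sym Hp))) _.
  exact: equiv_trans (equiv_cons 1 (equiv_cons n Hq)) (relation_k _ Hk).
- move=> e [x Hx] [y Hy].
  have [x' [y' [Hx' Hy' Hxy]]] := equiv_j_k Hj Hk neq (equiv_trans (equiv_sym Hx) Hy).
  have [g Hg] := Hl [:: j.-1 & x'] (ex_intro _ x' (equiv_refl _)) (ex_intro _ y' Hxy).
  have Hpg : x' ≡ p ++ g.
    by apply: (@cancel_letter j.-1); apply: equiv_trans Hg (equiv_catr g Hp).
  exists g; exact: equiv_trans Hx (equiv_cons j (equiv_trans Hx' (equiv_cons n Hpg))).
Qed.

Lemma lcm_letters s t c : lcms_below (weight c) -> s != t ->
  ldvd [:: s] c -> ldvd [:: t] c -> exists m0, is_lcm [:: s] [:: t] m0.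
Proof.
move=> IH neq [x Hx] [y Hy].
have [t1 [t2 [o1 o2 e]]] := equiv_distinct_heads neq (equiv_trans (equiv_sym Hx) Hy).
move: o1 o2 e => /= [[hs ->]|[x' [Hs [Hx' ->]]]] [[ht ->]|[y' [Ht [Hy' ->]]]] e.
- by move: neq; rewrite hs ht.
- by subst s; exists [:: 1; n; t.-1]; apply: lcm_1_k.
- by subst t; exists [:: 1; n; s.-1]; apply/is_lcm_sym/lcm_1_k.
- have [|||r Hr] := IH [:: s.-1] [:: t.-1] (s.-1 :: x');
    [|by exists x'|by exists y'; apply: cancel_letter e|].
  + by rewrite (equiv_weight Hx) /= !weight_cons (equiv_weight Hx') weight_cons; lia.
  + exact: lcm_j_k Hs Ht neq Hr.
Qed.

(* Words with distinct first letters and a common multiple c have an lcm: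
   with m0 the lcm of the two letters, combine lcm(m0, a) and lcm(m0, b). *)
Lemma lcm_distinct_heads s t a b c : lcms_below (weight c) -> s != t ->
  ldvd (s :: a) c -> ldvd (t :: b) c -> exists m, is_lcm (s :: a) (t :: b) m.
Proof.
move=> IH neq Ha Hb.
have Hs := ldvd_trans (ldvd_head s a) Ha; have Ht := ldvd_trans (ldvd_head t b) Hb.
have [m0 Hm0] := lcm_letters IH neq Hs Ht.
case: (Hm0) => [[s' Hs'] [t' Ht'] m0_min]; have m0c := m0_min c Hs Ht.
have lcm_m0 r r' w : m0 ≡ r :: r' -> ldvd (r :: w) c ->
    exists l, is_lcm m0 (r :: w) l.
  move=> Hr Hw; have [|||l Hl] := @lcm_common_prefix [:: r] r' w c IH.
  - by rewrite weight_cons; lia.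
  - exact: ldvd_equivl Hr m0c.
  - exact: Hw.
  - by exists l; apply: is_lcm_equivl (equiv_sym Hr) Hl.
have [la Hla] := lcm_m0 _ _ _ Hs' Ha; have [lb Hlb] := lcm_m0 _ _ _ Ht' Hb.
case: (Hla) => [[p Hp] _ la_min]; case: (Hlb) => [[q Hq] _ lb_min].
have [|||m Hm] := @lcm_common_prefix m0 p q c IH.
- by rewrite (equiv_weight Hs') /= weight_cons; lia.
- exact: ldvd_equivl Hp (la_min c m0c Ha).
- exact: ldvd_equivl Hq (lb_min c m0c Hb).
exists m; apply: (is_lcm_through _ Hla Hlb).
- move=> e Hae Hbe; apply: m0_min.
  + exact: ldvd_trans (ldvd_head s a) Hae.
  + exact: ldvd_trans (ldvd_head t b) Hbe.
- by apply: is_lcm_equivl (equiv_sym Hp) _; apply/is_lcm_sym;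
    apply: is_lcm_equivl (equiv_sym Hq) _; apply/is_lcm_sym.
Qed.

Lemma lcm_exists a b c : ldvd a c -> ldvd b c -> exists m, is_lcm a b m.
Proof.
move: {2}(weight c) (erefl (weight c)) => W.
elim/ltn_ind: W a b c => W IH a b c Hw Ha Hb.
have IHc : lcms_below (weight c) by move=> a' b' c'; rewrite Hw => /IH; apply.
case: a Ha => [|s a] Ha.
  by exists b; split; [apply: ldvd_nil|apply: ldvd_refl|].
case: b Hb => [|t b] Hb.
  by exists (s :: a); split; [apply: ldvd_refl|apply: ldvd_nil|].
case: (eqVneq s t) Hb => [<-|neq] Hb; last exact: lcm_distinct_heads IHc neq Ha Hb.
by apply: (@lcm_common_prefix [:: s] a b c IHc) => //; rewrite weight_cons; lia.
Qed.

(* Transport to the notions of the statement: a factor of a word over {1..n} is again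
   a word over {1..n}, so [ldvd] and [right_multiple] agree on such words. *)
Lemma word_ok_factors c a b :
  word_ok n c -> c ≡ a ++ b -> word_ok n a /\ word_ok n b.
Proof.
by move=> Hc H; move: Hc; rewrite (equiv_word_ok H) /word_ok all_cat => /andP.
Qed.

Lemma right_multipleP c a : word_ok n c -> ldvd a c -> right_multiple n c a.
Proof. by move=> Hc [b Hb]; exists b; split => //; case: (word_ok_factors Hc Hb). Qed.

Lemma right_multiple_ldvd c a : right_multiple n c a -> ldvd a c.
Proof. by case=> b [_ Hb]; exists b. Qed.

End Mn.

Theorem proposition4p9 (n : nat) (hn : 1 <= n) :
  left_cancellative n /\ conditional_right_lcms n.
Proof.
split; first by move=> a b c _ _ _; apply: cancel_prefix.
move=> a b _ _ [c [Hc /right_multiple_ldvd Hac /right_multiple_ldvd Hbc]].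
have [m [Ham Hbm m_min]] := lcm_exists Hac Hbc.
have [z Hz] := m_min c Hac Hbc.
have [okm _] := word_ok_factors Hc Hz.
exists m; split => //; try exact: right_multipleP.
move=> e He /right_multiple_ldvd Hae /right_multiple_ldvd Hbe.
exact/right_multipleP/m_min.
Qed.
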